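(* Let $\mathsf{M}=(E,\mathcal{L})$ be a loopless matroid and $S\subseteq E$ any subset. Then there is a well-defined ring homomorphism $\rho_S:A^*(\mathsf{M}|_S)\rightarrow A^*(\mathsf{M})$ defined on generators by \[ \rho_S(D_G)=\sum_{G'\in\mathcal{L}^*,\ G\subseteq G'\subseteq G\cup (E\setminus S)}D_{G'} \] for every proper flat $G$ of $\mathsf{M}|_S$. In addition, if $S_1\subseteq S_2$ are nonempty flats, then $\rho_{S_1}=\rho_{S_1}\circ \rho_{S_2}$ (where $\rho_{S_1}$ on the right denotes the corresponding homomorphism $A^*(\mathsf{M}|_{S_1})\to A^*(\mathsf{M}|_{S_2})$ for the matroid $\mathsf{M}|_{S_2}$).
   Context: A matroid $\mathsf{M}=(E,\mathcal{L})$ consists of a finite ground set $E$ and a collection $\mathcal{L}\subseteq 2^E$ of flats such that (1) the intersection of two flats is a flat, and (2) for every flat $F$, every element of $E\setminus F$ lies in exactly one flat minimal among flats strictly containing $F$. It is loopless if $\emptyset\in\mathcal{L}$. Write $\mathcal{L}^*=\mathcal{L}\setminus\{\emptyset,E\}$ for proper flats. The restriction $\mathsf{M}|_S$ is the matroid on ground set $S$ with flats $\{F\cap S\mid F\in\mathcal{L}\}$. For a loopless matroid $\mathsf{N}=(E',\mathcal{L}')$, the Chow ring is $A^*(\mathsf{N})=\mathbb{Z}[X_F\mid F\in\mathcal{L}'^*]/(\mathcal{I}+\mathcal{J})$, where $\mathcal{L}'^*=\mathcal{L}'\setminus\{\emptyset,E'\}$, $\mathcal{I}$ is generated by $X_{F_1}X_{F_2}$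 for incomparable $F_1,F_2$, and $\mathcal{J}$ by $\sum_{F\in\mathcal{L}'^*,\,e\in F}X_F-\sum_{F\in\mathcal{L}'^*,\,f\in F}X_F$ for $e,f\in E'$; $D_F$ denotes the class of $X_F$. *)

From HB Require Import structures.
From mathcomp Require Import all_boot all_order all_algebra.
From mathcomp Require Import mpoly.

Set Implicit Arguments.
Unset Strict Implicit.
Unset Printing Implicit Defensive.

Import GRing.Theory.
Local Open Scope ring_scope.

Section Matroid.
Variable T : finType.
Implicit Types (E S F G : {set T}) (L : {set {set T}}).

Definition covers L F G : Prop :=
  G \in L /\ F \proper G /\ (forall G', G' \in L -> F \proper G' -> ~ (G' \proper G)).

Definition is_matroid E L : Prop :=
  (forall F, F \in L -> F \subset E) /\
  (forall F1 F2, F1 \in L -> F2 \in L -> F1 :&: F2 \in L) /\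
  (forall F, F \in L -> forall e, e \in E -> e \notin F ->
     exists! G, covers L F G /\ e \in G).

Definition loopless L : Prop := set0 \in L.

(* flats of the restriction M|_S (its ground set is S) *)
Definition restr_flats L S : {set {set T}} := [set F :&: S | F in L].

Definition pflats E L : {set {set T}} := [set F in L | (F != set0) && (F != E)].

(* The polynomial ring Z[X_F | F in L^*]; the variable with index
   i : 'I_#|pflats E L| stands for the proper flat [enum_val i]. *)
Definition chowpoly E L := {mpoly int[#|pflats E L|]}.

Definition flat_of E L (i : 'I_#|pflats E L|) : {set T} := enum_val i.

Definition lin_form E L (e : T) : chowpoly E L :=
  \sum_(i < #|pflats E L| | e \in flat_of i) 'X_i.

Definition chow_gen E L (g : chowpoly E L) : Prop :=
  (exists i j : 'I_#|pflats E L|,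
      ~~ (flat_of i \subset flat_of j) /\ ~~ (flat_of j \subset flat_of i) /\
      g = 'X_i * 'X_j) \/
  (exists e f, e \in E /\ f \in E /\ g = lin_form E L e - lin_form E L f).

Definition chow_ideal E L (p : chowpoly E L) : Prop :=
  exists s : seq (chowpoly E L * chowpoly E L),
    (forall x, x \in s -> chow_gen x.2) /\ p = \sum_(x <- s) x.1 * x.2.

(* two polynomials have the same class in A^*(E,L) *)
Definition chow_eq E L (p q : chowpoly E L) : Prop := chow_ideal (p - q).

Definition rho_img E L S LS (i : 'I_#|pflats S LS|) : chowpoly E L :=
  \sum_(j < #|pflats E L| |
        (flat_of i \subset flat_of j) && (flat_of j \subset flat_of i :|: (E :\: S)))
    'X_j.

Definition rho_poly E L S LS (p : chowpoly S LS) : chowpoly E L :=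
  comp_mpoly [tuple @rho_img E L S LS i | i < #|pflats S LS|] p.

End Matroid.

Arguments flat_of {T E L} i.
Arguments chow_gen {T E L} g.
Arguments chow_ideal {T E L} p.
Arguments chow_eq {T E L} p q.
Arguments rho_img {T} E L S LS i.
Arguments rho_poly {T} E L S LS p.

From HB Require Import structures.
From mathcomp Require Import all_boot all_order all_algebra.
From mathcomp Require Import mpoly.

(* A flat G' of M satisfies G <= G' <= G :|: (E :\: S) exactly when
   G' :&: S = G, so rho_S(D_G) is the sum of the D_G' with G' :&: S = G.
   Intersecting with S is monotone, hence incomparable G1, G2 only receive
   pairs of incomparable flats and the monomial relations are sent into I.
   For e in S, rho_S sends the linear form of e to the linear form of e minus
   the sum of the X_F over the flats F containing S; the correction does not
   depend on e, so the linear relations are sent into J.  For S1 <= S2 we have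
   (G' :&: S2) :&: S1 = G' :&: S1, so rho_S2 o rho_S1 and rho_S1 already agree
   as maps of polynomial rings. *)

Set Implicit Arguments.
Unset Strict Implicit.
Unset Printing Implicit Defensive.

Import GRing.Theory.
Local Open Scope ring_scope.

Lemma comp_mpolyA (R : comNzRingType) (n k l : nat) (lr : n.-tuple {mpoly R[k]})
    (lq : k.-tuple {mpoly R[l]}) (p : {mpoly R[n]}) :
  comp_mpoly lq (comp_mpoly lr p) =
  comp_mpoly [tuple comp_mpoly lq (tnth lr i) | i < n] p.
Proof.
rewrite (comp_mpolyE p lr) (comp_mpolyE p) raddf_sum /=.
apply: eq_bigr => m _; rewrite comp_mpolyZ rmorph_prod /=; congr (_ *: _).
by apply: eq_bigr => i _; rewrite rmorphXn tnth_mktuple.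
Qed.

Section ChowRestriction.
Variable T : finType.
Implicit Types (A B E S F G : {set T}) (L LS : {set {set T}}).

Lemma subset_setUD_eq_setI A B E S : A \subset S -> B \subset E ->
  (A \subset B) && (B \subset A :|: (E :\: S)) = (A == B :&: S).
Proof.
move=> /subsetP AS /subsetP BE; apply/andP/eqP => [[/subsetP AB /subsetP BA]|->].
  apply/setP => x; rewrite inE; apply/idP/andP => [xA|[xB xS]].
    by rewrite AB ?AS.
  by move: (BA x xB); rewrite !inE xS orbF.
split; first exact: subsetIl.
by apply/subsetP => x xB; rewrite !inE xB BE // andbT; case: (x \in S).
Qed.

Lemma flat_ofP E L (i : 'I_#|pflats E L|) : flat_of i \in pflats E L.
Proof. exact: enum_valP. Qed.

Lemma flat_of_inj E L : injective (@flat_of T E L).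
Proof. exact: enum_val_inj. Qed.

Lemma flat_of_flat E L (i : 'I_#|pflats E L|) : flat_of i \in L.
Proof. by have := flat_ofP i; rewrite inE => /andP[]. Qed.

Lemma flat_of_sub E L : {in L, forall F, F \subset E} ->
  forall i : 'I_#|pflats E L|, flat_of i \subset E.
Proof. by move=> LE i; apply/LE/flat_of_flat. Qed.

Lemma restr_flats_sub L S : {in restr_flats L S, forall F, F \subset S}.
Proof. by move=> _ /imsetP[F _ ->]; apply: subsetIr. Qed.

Lemma mem_restr_flats L S F : F \in L -> F :&: S \in restr_flats L S.
Proof. exact: imset_f. Qed.

Lemma sum_flat_of_eq E L (R : nmodType) F (x : R) :
  \sum_(i < #|pflats E L| | flat_of i == F) x = if F \in pflats E L then x else 0.
Proof.
case: ifP => LF; last first.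
  by rewrite big_pred0 // => i; apply: contraFF LF => /eqP <-; apply: flat_ofP.
have flat_of_rank : flat_of (enum_rank_in LF F) = F by apply: enum_rankK_in.
rewrite (big_pred1 (enum_rank_in LF F)) // => i /=.
by rewrite -[in LHS]flat_of_rank (inj_eq (@flat_of_inj E L)).
Qed.

Lemma sum_flat_of_fibers S LS (J : finType) (R : nmodType)
    (f : J -> {set T}) (a : pred {set T}) (x : J -> R) :
  \sum_(i < #|pflats S LS| | a (flat_of i)) \sum_(j | flat_of i == f j) x j =
  \sum_(j | (f j \in pflats S LS) && a (f j)) x j.
Proof.
rewrite (exchange_big_dep xpredT) //= [RHS]big_mkcond; apply: eq_bigr => j _.
case: (boolP (a (f j))) => [afj | nafj]; last first.
  by rewrite andbF big_pred0 // => i; rewrite andbC; case: eqP => // ->; apply/negbTE.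
rewrite andbT -sum_flat_of_eq; apply: eq_bigl => i.
by rewrite andbC; case: eqP => // ->.
Qed.

Section ChowIdeal.
Variables (E : {set T}) (L : {set {set T}}).
Implicit Types p q g : chowpoly E L.

Lemma chow_ideal0 : chow_ideal (0 : chowpoly E L).
Proof. by exists [::]; rewrite big_nil. Qed.

Lemma chow_idealD p q : chow_ideal p -> chow_ideal q -> chow_ideal (p + q).
Proof.
move=> [s1 [s1_gen ->]] [s2 [s2_gen ->]]; exists (s1 ++ s2).
by split; [move=> x; rewrite mem_cat => /orP[/s1_gen|/s2_gen] | rewrite big_cat].
Qed.

Lemma chow_idealMl q p : chow_ideal p -> chow_ideal (q * p).
Proof.
move=> [s [s_gen ->]]; exists [seq (q * x.1, x.2) | x <- s]; split.
  by move=> _ /mapP[x /s_gen x_gen ->].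
by rewrite big_map mulr_sumr; apply: eq_bigr => x _; rewrite mulrA.
Qed.

Lemma chow_ideal_sum (I : Type) (r : seq I) (P : pred I) (F : I -> chowpoly E L) :
  (forall i, P i -> chow_ideal (F i)) -> chow_ideal (\sum_(i <- r | P i) F i).
Proof.
move=> F_ideal; elim/big_rec: _ => [|i p Pi]; first exact: chow_ideal0.
by apply: chow_idealD; apply: F_ideal.
Qed.

Lemma chow_ideal_gen g : chow_gen g -> chow_ideal g.
Proof.
move=> g_gen; exists [:: (1, g)].
by split; [move=> x; rewrite inE => /eqP -> | rewrite big_seq1 mul1r].
Qed.

Lemma chow_eq_refl p : chow_eq p p.
Proof. by rewrite /chow_eq subrr; apply: chow_ideal0. Qed.

End ChowIdeal.

Section RhoPoly.
Variables (E S : {set T}) (L LS : {set {set T}}).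
Local Notation rho := (rho_poly E L S LS).

Lemma rho_polyB : {morph rho : p q / p - q}.
Proof. exact: comp_mpolyB. Qed.

Lemma rho_polyM : {morph rho : p q / p * q}.
Proof. exact: rmorphM. Qed.

Lemma rho_poly_sum (I : Type) (r : seq I) (P : pred I) (F : I -> chowpoly S LS) :
  rho (\sum_(i <- r | P i) F i) = \sum_(i <- r | P i) rho (F i).
Proof. exact: raddf_sum. Qed.

Lemma rho_polyX i : rho 'X_i = rho_img E L S LS i.
Proof. by rewrite /rho_poly comp_mpolyXU -tnth_nth tnth_mktuple. Qed.

Lemma rho_poly_sumX (P : pred 'I_#|pflats S LS|) :
  rho (\sum_(i | P i) 'X_i) = \sum_(i | P i) rho_img E L S LS i.
Proof. by rewrite rho_poly_sum; apply: eq_bigr => i _; apply: rho_polyX. Qed.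

Lemma rho_poly_chow_ideal :
  (forall g, chow_gen g -> chow_ideal (rho g)) ->
  forall p, chow_ideal p -> chow_ideal (rho p).
Proof.
move=> rho_gen _ [s [s_gen ->]]; rewrite big_seq rho_poly_sum.
by apply: chow_ideal_sum => x /s_gen x_gen; rewrite rho_polyM; apply/chow_idealMl/rho_gen.
Qed.

Lemma rho_imgE : {in L, forall F, F \subset E} -> {in LS, forall G, G \subset S} ->
  forall i, rho_img E L S LS i = \sum_(j | flat_of i == flat_of j :&: S) 'X_j.
Proof.
move=> LE LSS i; apply: eq_bigl => j.
by rewrite subset_setUD_eq_setI ?(flat_of_sub LE) ?(flat_of_sub LSS).
Qed.

End RhoPoly.

Section RhoRestriction.
Variables (E : {set T}) (L : {set {set T}}).
Hypothesis flats_sub : {in L, forall F, F \subset E}.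

Lemma rho_img_restrE S i :
  rho_img E L S (restr_flats L S) i = \sum_(j | flat_of i == flat_of j :&: S) 'X_j.
Proof. by apply: rho_imgE => //; apply: restr_flats_sub. Qed.

Lemma rho_lin_form S e : e \in S ->
  rho_poly E L S (restr_flats L S) (lin_form S (restr_flats L S) e) =
  lin_form E L e - \sum_(j | S \subset flat_of j) 'X_j.
Proof.
move=> eS; rewrite rho_poly_sumX (eq_bigr _ (fun i _ => rho_img_restrE i)).
rewrite (sum_flat_of_fibers _ _ (fun j => flat_of j :&: S) (fun G => e \in G)).
rewrite /lin_form [in RHS](bigID (fun j => S \subset flat_of j)) /=.
have -> : \sum_(j < #|pflats E L| | (e \in flat_of j) && (S \subset flat_of j)) 'X_j =
          \sum_(j < #|pflats E L| | S \subset flat_of j) 'X_j :> chowpoly E L.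
  by apply: eq_bigl => j; case: (boolP (S \subset _)) => [/subsetP SG|]; rewrite ?SG ?andbF.
rewrite addrAC subrr add0r; apply: eq_bigl => j.
rewrite inE mem_restr_flats ?flat_of_flat //= [e \in _]inE eS andbT.
case: (boolP (e \in flat_of j)) => eG; rewrite ?andbF //= andbT.
have -> : flat_of j :&: S != set0 by apply/set0Pn; exists e; rewrite inE eG.
by rewrite (sameP eqP setIidPr).
Qed.

Lemma rho_incomparable S (a b : 'I_#|pflats S (restr_flats L S)|) :
  ~~ (flat_of a \subset flat_of b) -> ~~ (flat_of b \subset flat_of a) ->
  chow_ideal (rho_poly E L S (restr_flats L S) ('X_a * 'X_b)).
Proof.
move=> nab nba; rewrite rho_polyM !rho_polyX !rho_img_restrE big_distrlr /=.
apply: chow_ideal_sum => j /eqP Ga; apply: chow_ideal_sum => k /eqP Gb.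
apply: chow_ideal_gen; left; exists j, k.
by split; [move: nab | split; [move: nba|]]; rewrite // Ga Gb; apply: contra; apply: setSI.
Qed.

Lemma rho_chow_gen S : S \subset E ->
  forall g : chowpoly S (restr_flats L S),
  chow_gen g -> chow_ideal (rho_poly E L S (restr_flats L S) g).
Proof.
move=> /subsetP SE g [[a [b [nab [nba ->]]]] | [e [f [eS [fS ->]]]]].
  exact: rho_incomparable.
rewrite rho_polyB !rho_lin_form // opprB addrA subrK.
by apply: chow_ideal_gen; right; exists e, f; rewrite !SE.
Qed.

Lemma rho_img_comp S1 S2 : S1 \subset S2 ->
  forall i, rho_poly E L S2 (restr_flats L S2)
              (rho_img S2 (restr_flats L S2) S1 (restr_flats L S1) i) =
            rho_img E L S1 (restr_flats L S1) i.
Proof.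
move=> S12 i; rewrite (rho_imgE (@restr_flats_sub L S2) (@restr_flats_sub L S1)).
rewrite rho_poly_sumX (eq_bigr _ (fun k _ => rho_img_restrE k)).
rewrite (sum_flat_of_fibers _ _ (fun j => flat_of j :&: S2)
                            (fun G => flat_of i == G :&: S1)).
rewrite rho_img_restrE; apply: eq_bigl => j; rewrite -setIA (setIidPr S12).
case: eqP => [Gi|]; rewrite ?andbF //= andbT.
move: (flat_ofP i); rewrite Gi !inE !mem_restr_flats ?flat_of_flat //=.
move=> /andP[ne0 neS1]; apply/andP; split.
  by apply: contraNneq ne0 => h; rewrite -subset0 -h setIS.
apply: contraNneq neS1 => /setIidPr S2G; apply/eqP/setIidPr.
exact: subset_trans S12 S2G.
Qed.

Lemma rho_poly_comp S1 S2 : S1 \subset S2 ->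
  forall p, rho_poly E L S2 (restr_flats L S2)
              (rho_poly S2 (restr_flats L S2) S1 (restr_flats L S1) p) =
            rho_poly E L S1 (restr_flats L S1) p.
Proof.
move=> S12 p; rewrite /rho_poly comp_mpolyA; congr comp_mpoly.
by apply: eq_mktuple => i; rewrite tnth_mktuple; apply: rho_img_comp.
Qed.

End RhoRestriction.
End ChowRestriction.

Theorem proposition3p6 (T : finType) (E : {set T}) (L : {set {set T}}) :
  is_matroid E L -> loopless L ->
  (* rho_S descends to a well-defined ring map A^*(M|_S) -> A^*(M) *)
  (forall S : {set T}, S \subset E ->
     forall p q : chowpoly S (restr_flats L S),
       chow_eq p q ->
       chow_eq (rho_poly E L S (restr_flats L S) p)
               (rho_poly E L S (restr_flats L S) q)) /\
  (* compatibility rho_{S1} = rho_{S2} o rho_{S1} for nonempty flats S1 <= S2 *)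
  (forall S1 S2 : {set T},
     S1 \in L -> S2 \in L -> S1 != set0 -> S2 != set0 -> S1 \subset S2 ->
     forall p : chowpoly S1 (restr_flats L S1),
       chow_eq (rho_poly E L S1 (restr_flats L S1) p)
               (rho_poly E L S2 (restr_flats L S2)
                  (rho_poly S2 (restr_flats L S2) S1 (restr_flats L S1) p))).
Proof.
move=> [flats_sub _] _; split.
  move=> S SE p q; rewrite /chow_eq -rho_polyB.
  exact/rho_poly_chow_ideal/rho_chow_gen.
move=> S1 S2 _ _ _ _ S12 p.
by rewrite rho_poly_comp //; apply: chow_eq_refl.
Qed.
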